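(* Let $\phi$ be a Drinfeld $A[\underline{t}_s]$-module over $\mathbb{T}_s$ with $\phi_\theta=\theta+A_1\tau+\dots+A_r\tau^r$, $A_r\in\mathbb{T}_s^\times$, let $\lambda\in\Lambda_\phi$, and let $f_\lambda(z)=\sum_{n\ge0}\exp_\phi(\lambda/\theta^{n+1})z^n$ be its Anderson generating function. Then: (a) $F_{\delta^0}(\lambda)=\operatorname{Res}_{z=\theta}f_\lambda(z)=-\lambda$; (b) for every $1\le j\le r-1$, \[ F_{\delta^j}(\lambda)=\sum_{n\ge0}\exp_\phi\Big(\frac{\lambda}{\theta^{n+1}}\Big)^{(j)}\theta^n=f_\lambda^{(j)}(z)\big|_{z=\theta}. \]
   Context: $\mathbb{F}_q$ finite field, $\theta,t_1,\dots,t_s,z$ independent variables, $A[\underline{t}_s]=\mathbb{F}_q[\theta,t_1,\dots,t_s]$, $\mathbb{F}_q[\underline{t}_s]=\mathbb{F}_q[t_1,\dots,t_s]$. $\mathbb{C}_\infty$: completion of an algebraic closure of $\mathbb{F}_q((1/\theta))$, $|\theta|_\infty=q$. $\mathbb{T}_s$: Tate algebra of power series in $t_1,\dots,t_s$ over $\mathbb{C}_\infty$ with coefficients tending to $0$, Gauss norm $\|\cdot\|_\infty$. $\tau$ raises $\mathbb{C}_\infty$-coefficients to the $q$-th power, $f^{(n)}=\tau^n(f)$, applied coefficientwise to power series in $z$ (fixing $z$). $\mathbb{T}_s[\tau]$, $\mathbb{T}_s[[\tau]]$: twisted rings with $\tau f=f^{(1)}\tau$, acting by $\sum a_i\tau^i(f)=\sum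 a_if^{(i)}$. A Drinfeld $A[\underline{t}_s]$-module is an $\mathbb{F}_q[\underline{t}_s]$-algebra homomorphism $\phi:A[\underline{t}_s]\to\mathbb{T}_s[\tau]$ with $\phi_\theta=\theta+A_1\tau+\dots+A_r\tau^r$. $\exp_\phi=\sum\alpha_i\tau^i$: unique series with $\alpha_0=1$, $\exp_\phi a=\phi_a\exp_\phi$; it converges on $\mathbb{T}_s$; $\Lambda_\phi=\ker\exp_\phi$. One has $f_\lambda(z)=\sum_{n\ge0}\alpha_n\lambda^{(n)}/(\theta^{q^n}-z)$, a function of $z$ with simple poles at $z=\theta^{q^n}$, and $\operatorname{Res}_{z=\theta}f_\lambda$ denotes its residue at $z=\theta$; for $j\ge1$, $f_\lambda^{(j)}$ converges for $|z|_\infty\le|\theta|_\infty$ so can be evaluated at $z=\theta$. A biderivation is an $\mathbb{F}_q[\underline{t}_s]$-linear map $\eta:A[\underline{t}_s]\to\tau\mathbb{T}_s[\tau]$ with $\eta_{ab}=a\eta_b+\eta_a\phi_b$; it is determined by $\eta_\theta$. $\delta^0$ is the biderivation $\delta^0_a=\phi_a-a$, and for $1\le j\le r-1$, $\delta^j$ is the biderivation with $\delta^j_\theta=\tau^j$. For a biderivation $\eta$, $F_\eta$ is the unique element of $\tau\mathbb{T}_s[[\tau]]$ with $F_\eta\theta-\theta F_\eta=\eta_\theta\exp_\phi$; it converges on every element of $\mathbb{T}_s$. *)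

From HB Require Import structures.
From mathcomp Require Import all_boot all_order all_algebra.
From mathcomp Require Import Rstruct.
Unset Printing Implicit Defensive.
Import Order.TTheory GRing.Theory Num.Theory.
Local Open Scope ring_scope.

Notation RR := Rdefinitions.R.

Definition nonarch_abs_value {C : fieldType} (av : C -> RR) : Prop :=
  (forall x : C, 0 <= av x) /\
  (forall x : C, av x = 0 <-> x = 0) /\
  (forall x y : C, av (x * y) = av x * av y) /\
  (forall x y : C, av (x + y) <= Num.max (av x) (av y)).

Definition av_complete {C : fieldType} (av : C -> RR) : Prop :=
  forall u : nat -> C,
    (forall eps : RR, 0 < eps -> exists N : nat,
        forall m n : nat, (N <= m)%N -> (N <= n)%N -> av (u m - u n) <= eps) ->
    exists l : C, forall eps : RR, 0 < eps -> exists N : nat,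
        forall n : nat, (N <= n)%N -> av (u n - l) <= eps.

(* c lies in F_q[theta] (F_q = fixed points of x |-> x^q) *)
Definition in_Fq_theta {C : fieldType} (q : nat) (theta c : C) : Prop :=
  exists l : seq C, all (fun a => a ^+ q == a) l /\
                    c = \sum_(i < size l) l`_i * theta ^+ i.

Definition alg_over_Fq_theta {C : fieldType} (q : nat) (theta y : C) : Prop :=
  exists P : {poly C}, P != 0 /\ root P y /\
                       forall i : nat, in_Fq_theta q theta P`_i.

(* (C, av, theta) is (isometrically isomorphic to) C_infty for q = p^e:
   C has characteristic p, is algebraically closed and complete for a
   non-archimedean absolute value with |theta| = q, and the algebraic
   closure of F_q(theta) in C is dense.  These properties determine
   C_infty = completion of an algebraic closure of F_q((1/theta)). *)
Definition is_Cinfty (p e : nat) (C : fieldType) (av : C -> RR) (theta : C)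
  : Prop :=
  prime p /\ (0 < e)%N /\ p \in [pchar C] /\
  GRing.closed_field_axiom C /\
  nonarch_abs_value av /\
  av_complete av /\
  av theta = ((p ^ e)%N)%:R /\
  (forall (x : C) (eps : RR), 0 < eps ->
     exists y : C, alg_over_Fq_theta (p ^ e) theta y /\ av (x - y) <= eps).

(* The Tate algebra T_s: power series in t_1..t_s, coefficients in C. *)
(* An element is a coefficient function on multi-indices.              *)

Definition mi (s : nat) := {ffun 'I_s -> nat}.
Definition mi0 (s : nat) : mi s := [ffun => 0%N].

Definition is_tate {s : nat} {C : fieldType} (av : C -> RR) (f : mi s -> C)
  : Prop :=
  forall eps : RR, 0 < eps -> exists N : nat,
    forall m : mi s, (N < \sum_(i < s) m i)%N -> av (f m) < eps.

Definition tzero (s : nat) (C : fieldType) : mi s -> C := fun _ => 0.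
Definition tone (s : nat) (C : fieldType) : mi s -> C :=
  fun m => if m == mi0 s then 1 else 0.
Definition tadd {s : nat} {C : fieldType} (f g : mi s -> C) : mi s -> C :=
  fun m => f m + g m.
Definition topp {s : nat} {C : fieldType} (f : mi s -> C) : mi s -> C :=
  fun m => - f m.
Definition tsub {s : nat} {C : fieldType} (f g : mi s -> C) : mi s -> C :=
  fun m => f m - g m.
Definition tscale {s : nat} {C : fieldType} (c : C) (f : mi s -> C)
  : mi s -> C := fun m => c * f m.
Definition tconst {s : nat} {C : fieldType} (c : C) : mi s -> C :=
  tscale c (tone s C).

Definition mimax {s : nat} (n : mi s) : nat := (\max_(i < s) n i)%N.

(* Cauchy product of power series in t_1..t_s *)
Definition tmul {s : nat} {C : fieldType} (f g : mi s -> C) : mi s -> C :=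
  fun n =>
    \sum_(a : {ffun 'I_s -> 'I_(mimax n).+1} | [forall i, (a i <= n i)%N])
       f [ffun i => nat_of_ord (a i)] * g [ffun i => (n i - a i)%N].

Definition tfrob {s : nat} {C : fieldType} (q k : nat) (f : mi s -> C)
  : mi s -> C := fun m => f m ^+ (q ^ k)%N.

Definition tate_unit {s : nat} {C : fieldType} (av : C -> RR) (f : mi s -> C)
  : Prop :=
  exists g : mi s -> C, is_tate av g /\ tmul f g = tone s C.

(* Gauss-norm convergence of the series sum_n u n to L in T_s
   (||x|| <= eps  iff  every coefficient has absolute value <= eps) *)
Definition series_to {s : nat} {C : fieldType} (av : C -> RR)
  (u : nat -> mi s -> C) (L : mi s -> C) : Prop :=
  forall eps : RR, 0 < eps -> exists N : nat,
    forall n : nat, (N <= n)%N ->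
      forall m : mi s, av ((\sum_(k < n) u k m) - L m) <= eps.

(* Twisted power series  T_s[[tau]],  tau f = f^{(1)} tau.             *)
(* A twisted series is the sequence of its tau^k coefficients.         *)

Definition twmul {s : nat} {C : fieldType} (q : nat)
  (a b : nat -> mi s -> C) : nat -> mi s -> C :=
  fun n m => \sum_(k < n.+1) tmul (a k) (tfrob q k (b (n - k)%N)) m.

Definition twconst {s : nat} {C : fieldType} (c : C) : nat -> mi s -> C :=
  fun k => if k == 0%N then tconst c else tzero s C.

Definition twtau (s : nat) (C : fieldType) (j : nat) : nat -> mi s -> C :=
  fun k => if k == j then tone s C else tzero s C.

Definition phi_theta {s : nat} {C : fieldType} (theta : C) (r : nat)
  (A : nat -> mi s -> C) : nat -> mi s -> C :=
  fun k => if k == 0%N then tconst theta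
           else if (k <= r)%N then A k else tzero s C.

Definition delta0_theta {s : nat} {C : fieldType} (r : nat)
  (A : nat -> mi s -> C) : nat -> mi s -> C :=
  fun k => if k == 0%N then tzero s C
           else if (k <= r)%N then A k else tzero s C.

Definition is_exp_series {s : nat} {C : fieldType} (q : nat) (theta : C)
  (phith : nat -> mi s -> C) (alpha : nat -> mi s -> C) : Prop :=
  alpha 0%N = tone s C /\
  twmul q alpha (twconst theta) = twmul q phith alpha.

(* beta is F_eta for the biderivation eta with eta_theta = etath:
   beta in tau T_s[[tau]] and  beta theta - theta beta = etath exp_phi *)
Definition is_F_series {s : nat} {C : fieldType} (q : nat) (theta : C)
  (etath alpha beta : nat -> mi s -> C) : Prop :=
  beta 0%N = tzero s C /\
  (forall n : nat,
     tsub (twmul q beta (twconst theta) n) (twmul q (twconst theta) beta n)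
     = twmul q etath alpha n).

(* the terms of  (sum_n a_n tau^n)(f) = sum_n a_n f^{(n)} *)
Definition tw_terms {s : nat} {C : fieldType} (q : nat)
  (a : nat -> mi s -> C) (f : mi s -> C) : nat -> mi s -> C :=
  fun n => tmul (a n) (tfrob q n f).

Definition in_period_lattice {s : nat} {C : fieldType} (av : C -> RR) (q : nat)
  (alpha : nat -> mi s -> C) (lam : mi s -> C) : Prop :=
  is_tate av lam /\ series_to av (tw_terms q alpha lam) (tzero s C).

(* Res_{z=theta} f_lambda = L, where
   f_lambda(z) = sum_n alpha_n lambda^{(n)} / (theta^{q^n} - z),
   and the residue at the simple pole theta is  lim_{z -> theta} (z - theta) f_lambda(z). *)
Definition agf_residue_at_theta {s : nat} {C : fieldType} (av : C -> RR)
  (q : nat) (theta : C) (alpha : nat -> mi s -> C) (lam L : mi s -> C)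
  : Prop :=
  forall eps : RR, 0 < eps -> exists del : RR, 0 < del /\
    forall z : C, 0 < av (z - theta) -> av (z - theta) < del ->
      exists v : mi s -> C,
        series_to av
          (fun n => tscale ((theta ^+ (q ^ n)%N - z)^-1)
                           (tmul (alpha n) (tfrob q n lam))) v /\
        forall m : mi s, av ((z - theta) * v m - L m) <= eps.

(* Write c_n = alpha_n lambda^(n) for the terms of exp_phi(lambda) = 0.  They tend
   to 0 for the Gauss norm, which is ultrametric: a series converges as soon as its
   terms tend to 0, and a double series whose terms tend to 0 uniformly can be summed
   in either order.  Comparing tau^n-coefficients in exp_phi theta = phi_theta exp_phi
   and in F_eta theta - theta F_eta = eta_theta exp_phi gives
     (theta^(q^n) - theta) alpha_n = (delta^0_theta exp_phi)_n,
     (theta^(q^n) - theta) beta_n  = (eta_theta exp_phi)_n,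
   with |theta^(q^n) - theta| = q^(q^n) >= 1 for n > 0.
   (a) For eta = delta^0 both recursions agree, so F_(delta^0) = exp_phi - 1 and
   F_(delta^0)(lambda) = -lambda.  Near z = theta only the term lambda / (theta - z)
   of f_lambda(z) is unbounded, so the residue is -lambda as well.
   (b) For eta = delta^j, beta_(k+j) = alpha_k^(j) / (theta^(q^(k+j)) - theta), so
   F_(delta^j)(lambda) = sum_k c_k^(j) / (theta^(q^(k+j)) - theta).  Expanding
   1 / (theta^P - theta) = sum_n theta^n / theta^(P(n+1)) yields a uniformly null
   double series whose sum over k is theta^n exp_phi(lambda / theta^(n+1))^(j). *)

From HB Require Import structures.
From mathcomp Require Import all_boot all_order all_algebra.
From mathcomp Require Import Rstruct.
From mathcomp Require Import ring lra.
From Stdlib Require Import FunctionalExtensionality IndefiniteDescription.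
Import Order.TTheory GRing.Theory Num.Theory.
Local Open Scope ring_scope.
Set Implicit Arguments. Unset Strict Implicit.

Lemma sum_ord_subr (V : zmodType) (f : nat -> V) n n' : (n <= n')%N ->
  \sum_(k < n') f k - \sum_(k < n) f k = \sum_(n <= k < n') f k.
Proof.
move=> le_nn'; rewrite -!(big_mkord xpredT) (big_cat_nat (leq0n n) le_nn') /=.
by rewrite addrAC subrr add0r.
Qed.

Section UltrametricAbsValue.

Variables (C : fieldType) (av : C -> RR).
Hypothesis Hav : nonarch_abs_value av.

Lemma av_ge0 x : 0 <= av x.
Proof. by case: Hav. Qed.

Lemma av_eq0 x : av x = 0 -> x = 0.
Proof. by case: Hav => _ [H _] /H. Qed.

Lemma av0 : av 0 = 0.
Proof. by case: Hav => _ [H _]; apply/H. Qed.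

Lemma avM x y : av (x * y) = av x * av y.
Proof. by case: Hav => _ [_ [H _]]. Qed.

Lemma av_neq0 x : x != 0 -> av x != 0.
Proof. by move=> x0; apply/eqP=> /av_eq0/eqP; apply/negP. Qed.

Lemma av1 : av 1 = 1.
Proof.
have h := avM 1 1; rewrite mulr1 in h.
by apply: (mulIf (av_neq0 (oner_neq0 C))); rewrite mul1r -h.
Qed.

Lemma avN x : av (- x) = av x.
Proof.
have h := avM (-1) (-1); rewrite mulrNN mulr1 av1 in h.
have g := av_ge0 (-1).
have avN1 : av (-1) = 1 by nra.
by rewrite -mulN1r avM avN1 mul1r.
Qed.

Lemma avX x n : av (x ^+ n) = av x ^+ n.
Proof. by elim: n => [|n IH]; rewrite ?expr0 ?av1 // !exprS avM IH. Qed.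

Lemma avV x : av x^-1 = (av x)^-1.
Proof.
have [->|x0] := eqVneq x 0; first by rewrite invr0 av0 invr0.
by apply: (mulfI (av_neq0 x0)); rewrite -avM !mulfV ?av1 ?av_neq0.
Qed.

Lemma avD_le x y b : av x <= b -> av y <= b -> av (x + y) <= b.
Proof.
move=> hx hy; case: Hav => _ [_ [_ H]]; apply: le_trans (H x y) _.
by rewrite ge_max hx hy.
Qed.

Lemma avB_le x y b : av x <= b -> av y <= b -> av (x - y) <= b.
Proof. by move=> hx hy; apply: avD_le; rewrite ?avN. Qed.

Lemma av_sum_le (I : Type) (r : seq I) (P : pred I) (F : I -> C) b :
  0 <= b -> (forall i, P i -> av (F i) <= b) -> av (\sum_(i <- r | P i) F i) <= b.
Proof.
move=> b0 hF; elim/big_rec: _ => [|i x Pi hx]; first by rewrite av0.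
by apply: avD_le => //; apply: hF.
Qed.

Lemma avB_dominant x y : av y < av x -> av (x - y) = av x.
Proof.
move=> lt_yx; apply/eqP; rewrite eq_le; apply/andP; split.
  by apply: avB_le => //; apply: ltW.
case: Hav => _ [_ [_ H]]; have := H (x - y) y; rewrite subrK le_max.
by case/orP => // h; move: (lt_le_trans lt_yx h); rewrite ltxx.
Qed.

Lemma avX_le x B n : av x <= B -> av (x ^+ n) <= B ^+ n.
Proof. by move=> h; rewrite avX lerXn2r ?nnegrE ?(le_trans (av_ge0 x)). Qed.

Lemma av_sum_nat_le (f : nat -> C) n n' b : 0 <= b ->
  (forall k, (n <= k)%N -> av (f k) <= b) -> av (\sum_(n <= k < n') f k) <= b.
Proof.
by move=> b0 hf; rewrite big_nat_cond; apply: av_sum_le => // k /andP[/andP[/hf]].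
Qed.

Lemma av_partial_subr_le (f : nat -> C) N a a' b : 0 <= b ->
  (forall k, (N <= k)%N -> av (f k) <= b) -> (N <= a)%N -> (N <= a')%N ->
  av (\sum_(k < a) f k - \sum_(k < a') f k) <= b.
Proof.
move=> b0 hf ha ha'.
have -> : \sum_(k < a) f k - \sum_(k < a') f k =
    (\sum_(k < a) f k - \sum_(k < N) f k) - (\sum_(k < a') f k - \sum_(k < N) f k).
  by ring.
by rewrite !sum_ord_subr //; apply: avB_le; apply: av_sum_nat_le.
Qed.

Lemma av_lim_subr_partial_le (f : nat -> C) l n b : 0 <= b ->
  (forall eps : RR, 0 < eps -> exists N, forall n', (N <= n')%N ->
     av (\sum_(k < n') f k - l) <= eps) ->
  (forall k, (n <= k)%N -> av (f k) <= b) ->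
  av (l - \sum_(k < n) f k) <= b.
Proof.
move=> b0 cvg_f hf; apply/ler_addgt0Pr => eps e0.
have [N hN] := cvg_f eps e0; pose n' := maxn N n.
have -> : l - \sum_(k < n) f k =
    (\sum_(k < n') f k - \sum_(k < n) f k) - (\sum_(k < n') f k - l) by ring.
apply: avB_le; last exact: ler_wpDl (hN n' (leq_maxl N n)).
by apply: ler_wpDr (ltW e0) _; apply: av_partial_subr_le hf _ _; rewrite ?leq_maxr.
Qed.

End UltrametricAbsValue.

Lemma exprn_le_min (R : realDomainType) (x eps : R) n : (0 < n)%N -> 0 <= x ->
  x <= Num.min eps 1 -> x ^+ n <= eps.
Proof.
rewrite le_min => n0 x0 /andP[x_eps x1].
exact: le_trans (ler_iXnr n0 x0 x1) x_eps.
Qed.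

Lemma mulr_divD1_le (R : numFieldType) (eps B : R) : 0 <= eps -> 0 <= B -> eps / (B + 1) * B <= eps.
Proof.
move=> eps0 B0; rewrite -mulrA -[leRHS]mulr1 ler_wpM2l // mulrC ler_pdivrMr ?ltr_wpDl //.
by rewrite mul1r lerDl.
Qed.

Lemma expr_half_small (R : archiFieldType) (t : R) : 0 <= t -> t <= 2^-1 ->
  forall eps : R, 0 < eps -> exists N, forall n, (N <= n)%N -> t ^+ n <= eps.
Proof.
move=> t0 t_half eps e0; exists (Num.bound eps^-1) => n hn.
have le_t_half : t ^+ n <= (2 ^+ n)^-1.
  by rewrite -exprVn; apply: lerXn2r; rewrite ?nnegrE ?invr_ge0.
apply: le_trans le_t_half _.
have bound_le : (Num.bound eps^-1)%:R <= (2 ^+ n : R).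
  rewrite -natrX ler_nat; apply: leq_trans hn _; exact/ltnW/ltn_expl.
rewrite -[leRHS]invrK lef_pV2 ?posrE ?exprn_gt0 ?invr_gt0 //.
by apply: le_trans bound_le; apply/ltW/archi_boundP; rewrite invr_ge0 ltW.
Qed.

Lemma uniform_bound_ltn (R : numDomainType) (P : nat -> R -> Prop) N :
  (forall k (B B' : R), B <= B' -> P k B -> P k B') ->
  (forall k, (k < N)%N -> exists B : R, 0 <= B /\ P k B) ->
  exists B : R, 0 <= B /\ forall k, (k < N)%N -> P k B.
Proof.
move=> mono; elim: N => [|N IH] h; first by exists 0; split => // k.
have [B1 [B1_ge0 hB1]] := IH (fun k hk => h k (leqW hk)).
have [B2 [B2_ge0 hB2]] := h N (ltnSn N).
exists (B1 + B2); split => [|k]; first exact: addr_ge0.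
rewrite ltnS leq_eqVlt => /orP [/eqP ->|hk].
  by apply: mono hB2; rewrite lerDr.
by apply: mono (hB1 k hk); rewrite lerDl.
Qed.

Section FrobeniusPower.

Variables (R : comNzRingType) (Q : nat).
Hypothesis pchar_Q : [pchar R].-nat Q.

Lemma exprBn_pchar (x y : R) : (x - y) ^+ Q = x ^+ Q - y ^+ Q.
Proof. by rewrite exprDn_pchar // exprNn_pchar. Qed.

Lemma expr_sum_pchar (I : Type) (r : seq I) (P : pred I) (F : I -> R) :
  (\sum_(i <- r | P i) F i) ^+ Q = \sum_(i <- r | P i) F i ^+ Q.
Proof.
apply: (big_morph (fun x => x ^+ Q)) => [x y|]; first exact: exprDn_pchar.
by case/andP: pchar_Q; rewrite expr0n => /gtn_eqF ->.
Qed.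

End FrobeniusPower.

Section GaussNormSeries.

Variables (C : fieldType) (av : C -> RR) (s : nat).
Implicit Types (u v : nat -> mi s -> C) (L : mi s -> C).

Definition null_seq u := forall eps : RR, 0 < eps ->
  exists N, forall n m, (N <= n)%N -> av (u n m) <= eps.

Lemma series_to_ext u v L L' : series_to av u L ->
  (forall n m, u n m = v n m) -> (forall m, L m = L' m) -> series_to av v L'.
Proof.
move=> hs huv hL eps e0; have [N hN] := hs eps e0; exists N => n hn m.
by rewrite -hL; under eq_bigr do rewrite -huv; exact: hN.
Qed.

Lemma series_to_eq_tail u v L : series_to av u L ->
  (forall n m, (0 < n)%N -> v n m = u n m) ->
  series_to av v (fun m => L m - u 0%N m + v 0%N m).
Proof.
move=> hs v_eq eps e0; have [N hN] := hs eps e0.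
exists N.+1 => -[//|n] hn m.
have := hN n.+1 (ltnW hn) m; rewrite !big_ord_recl.
have -> : \sum_(i < n) v (bump 0 i) m = \sum_(i < n) u (bump 0 i) m.
  by apply: eq_bigr => i _; apply: v_eq.
set S := \sum_(i < n) u (bump 0 i) m.
by have -> : v 0%N m + S - (L m - u 0%N m + v 0%N m) = u 0%N m + S - L m by ring.
Qed.

Lemma series_to_shift u K X j : series_to av K X ->
  (forall n m, (n < j)%N -> u n m = 0) -> (forall k m, u (k + j)%N m = K k m) ->
  series_to av u X.
Proof.
move=> hK u_lt u_shift eps e0; have [N hN] := hK eps e0.
exists (N + j)%N => n hn m.
have le_jn : (j <= n)%N by apply: leq_trans hn; rewrite leq_addl.
have -> : \sum_(k < n) u k m = \sum_(k < n - j) K k m.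
  have -> : \sum_(k < n) u k m = \sum_(k < n) u k m - \sum_(k < j) u k m.
    by rewrite [\sum_(k < j) _]big1 ?subr0 // => k _; apply: u_lt.
  rewrite (sum_ord_subr (fun k => u k m)) // -{1}[j]add0n big_addn big_mkord.
  by apply: eq_bigr => k _; apply: u_shift.
by apply: hN; rewrite leq_subRL // addnC.
Qed.

Hypothesis Hav : nonarch_abs_value av.

Lemma series_to_null u L : series_to av u L -> null_seq u.
Proof.
move=> hs eps e0; have [N hN] := hs eps e0; exists N => n m hn.
have -> : u n m = (\sum_(k < n.+1) u k m - L m) - (\sum_(k < n) u k m - L m).
  by rewrite big_ord_recr /=; ring.
by apply: (avB_le Hav); apply: hN => //; apply: leqW.
Qed.

Lemma series_to_tail u L n b : series_to av u L -> 0 <= b ->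
  (forall k m, (n <= k)%N -> av (u k m) <= b) ->
  forall m, av (L m - \sum_(k < n) u k m) <= b.
Proof.
move=> hs b0 hb m.
apply: (av_lim_subr_partial_le Hav (f := fun k => u k m) b0) => [eps e0|k hk].
  by have [N hN] := hs eps e0; exists N => n' hn; apply: hN.
exact: hb.
Qed.

Lemma series_to_of_null u : av_complete av -> null_seq u ->
  exists L, series_to av u L.
Proof.
move=> Hc hu.
have cvg_m : forall m, exists l, forall eps : RR, 0 < eps -> exists N, forall n,
    (N <= n)%N -> av (\sum_(k < n) u k m - l) <= eps.
  move=> m; apply: (Hc (fun n => \sum_(k < n) u k m)).
  move=> eps e0; have [N hN] := hu eps e0; exists N => a a' ha ha'.
  by apply: (av_partial_subr_le Hav (f := fun k => u k m) (ltW e0) _ ha ha') => k hk;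
    apply: hN.
have [L hL] := functional_choice _ cvg_m.
exists L => eps e0; have [N hN] := hu eps e0; exists N => n hn m.
rewrite -(avN Hav) opprB.
apply: (av_lim_subr_partial_le Hav (f := fun k => u k m) (ltW e0) (hL m)) => k hk.
by apply: hN; apply: leq_trans hk.
Qed.

Lemma series_to_scale u L c : series_to av u L ->
  series_to av (fun n m => c * u n m) (fun m => c * L m).
Proof.
move=> hs eps e0; have c0 := av_ge0 Hav c.
have e1 : 0 < eps / (av c + 1) by apply: divr_gt0 => //; lra.
have [N hN] := hs _ e1; exists N => n hn m.
rewrite -mulr_sumr -mulrBr (avM Hav).
apply: le_trans (ler_wpM2l c0 (hN n hn m)) _.
by rewrite mulrC; apply: mulr_divD1_le (ltW e0) c0.
Qed.

Lemma series_to_frob u L Q : [pchar C].-nat Q ->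
  series_to av u L -> series_to av (fun n m => u n m ^+ Q) (fun m => L m ^+ Q).
Proof.
move=> pchar_Q hs eps e0; have Q0 : (0 < Q)%N by case/andP: pchar_Q.
have e1 : 0 < Num.min eps 1 by rewrite lt_min e0 ltr01.
have [N hN] := hs _ e1; exists N => n hn m.
rewrite -expr_sum_pchar // -exprBn_pchar // (avX Hav).
exact: exprn_le_min Q0 (av_ge0 Hav _) (hN n hn m).
Qed.

Lemma series_to_exchange (a : nat -> nat -> mi s -> C) R K X :
  (forall eps : RR, 0 < eps -> exists N, forall n k m,
     (N <= n)%N \/ (N <= k)%N -> av (a n k m) <= eps) ->
  (forall n, series_to av (a n) (R n)) ->
  (forall k, series_to av (fun n => a n k) (K k)) ->
  series_to av K X -> series_to av R X.
Proof.
move=> a_null rows cols hK eps e0.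
have [N1 hN1] := a_null eps e0; have [N2 hN2] := hK eps e0.
exists (maxn N1 N2) => n; rewrite geq_max => /andP[hn1 hn2] m.
have -> : \sum_(i < n) R i m - X m =
    \sum_(i < n) (R i m - \sum_(k < n) a i k m)
    - \sum_(k < n) (K k m - \sum_(i < n) a i k m) + (\sum_(k < n) K k m - X m).
  rewrite !sumrB (exchange_big _ _ _ _ _ (fun i k => a (nat_of_ord i) (nat_of_ord k) m)) /=.
  ring.
have e0' : 0 <= eps := ltW e0.
apply: (avD_le Hav); last exact: hN2.
apply: (avB_le Hav); apply: (av_sum_le Hav _ e0') => i _.
  by apply: (series_to_tail (rows i) e0') => k m' hk; apply: hN1; right;
    apply: leq_trans hk.
by apply: (series_to_tail (cols i) e0') => k m' hk; apply: hN1; left;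
  apply: leq_trans hk.
Qed.

Lemma series_to_geometric (x y : C) (g : mi s -> C) (Bg : RR) :
  (forall eps : RR, 0 < eps -> exists N, forall n, (N <= n)%N -> av (x ^+ n) <= eps) ->
  (forall m, av (g m) <= Bg) ->
  series_to av (fun n m => y * x ^+ n * g m) (fun m => y * (1 - x)^-1 * g m).
Proof.
move=> x_null g_le eps e0.
have Bg0 : 0 <= Bg := le_trans (av_ge0 Hav _) (g_le (mi0 s)).
have x1 : x - 1 != 0.
  apply/eqP => /eqP; rewrite subr_eq0 => /eqP x1.
  have half0 : (0 : RR) < 2^-1 by rewrite invr_gt0.
  have [N hN] := x_null _ half0.
  by move: (hN N (leqnn N)); rewrite x1 expr1n (av1 Hav); lra.
set c := av (y * (1 - x)^-1); have c0 : 0 <= c by apply: av_ge0.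
have D0 : 0 < c * Bg + 1 by apply: ltr_pwDr => //; apply: mulr_ge0.
have [N hN] := x_null _ (divr_gt0 e0 D0); exists N => n hn m.
have -> : \sum_(k < n) y * x ^+ k * g m - y * (1 - x)^-1 * g m =
    - (x ^+ n * (y * (1 - x)^-1) * g m).
  have -> : \sum_(k < n) y * x ^+ k * g m = y * g m * ((x ^+ n - 1) / (x - 1)).
    rewrite subrX1 [(x - 1) * _]mulrC mulfK // mulr_sumr.
    by apply: eq_bigr => k _; ring.
  by field; rewrite -[1 - x]opprB oppr_eq0 x1.
rewrite (avN Hav) (avM Hav) (avM Hav (x ^+ n)) -/c.
apply: le_trans (_ : eps / (c * Bg + 1) * c * Bg <= _).
  apply: ler_pM; rewrite ?mulr_ge0 ?av_ge0 //.
  by apply: ler_wpM2r => //; apply: hN.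
by rewrite -mulrA; apply: mulr_divD1_le (ltW e0) (mulr_ge0 c0 Bg0).
Qed.

End GaussNormSeries.

Section TateAlgebra.

Variables (C : fieldType) (s : nat).
Implicit Types (f g : mi s -> C) (c : C).

Lemma le_mimax (n : mi s) i : (n i <= mimax n)%N.
Proof. exact: (@leq_bigmax _ (fun i => n i) i). Qed.

Lemma tmul_sum_single (n t : mi s) (F : {ffun 'I_s -> 'I_(mimax n).+1} -> C) :
  (forall i, (t i <= n i)%N) ->
  (forall a : {ffun 'I_s -> 'I_(mimax n).+1}, [forall i, (a i <= n i)%N] ->
     [ffun i => nat_of_ord (a i)] != t -> F a = 0) ->
  \sum_(a : {ffun 'I_s -> 'I_(mimax n).+1} | [forall i, (a i <= n i)%N]) F a
  = F [ffun i => inord (t i)].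
Proof.
move=> le_tn F0.
have t_lt i : (t i < (mimax n).+1)%N by rewrite ltnS (leq_trans (le_tn i)) ?le_mimax.
have a0P : [forall i, ([ffun i => (inord (t i) : 'I_(mimax n).+1)] i <= n i)%N].
  by apply/forallP => i; rewrite ffunE inordK.
rewrite (bigD1 _ a0P) /= big1 ?addr0 // => a /andP [ha ne]; apply: F0 => //.
apply: contra ne => /eqP e; apply/eqP/ffunP => i; apply: val_inj.
by rewrite ffunE /= inordK // -e ffunE.
Qed.

Lemma tmul_tconstr f c n : tmul f (tconst c) n = c * f n.
Proof.
have n_lt i : (n i < (mimax n).+1)%N by rewrite ltnS le_mimax.
rewrite /tmul (tmul_sum_single (t := n)) // => [|a ha ne]; rewrite /tconst /tscale /tone.
  have -> : [ffun i => nat_of_ord ([ffun i => (inord (n i) : 'I_(mimax n).+1)] i)] = n.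
    by apply/ffunP => i; rewrite !ffunE inordK.
  have -> : [ffun i => (n i - [ffun i => (inord (n i) : 'I_(mimax n).+1)] i)%N] == mi0 s.
    by apply/eqP/ffunP => i; rewrite !ffunE inordK ?subnn.
  by rewrite mulr1 mulrC.
case: eqP => [e|]; last by rewrite !mulr0.
case/negP: ne; apply/eqP/ffunP => i; rewrite ffunE.
have := congr1 (fun g : mi s => g i) e; rewrite !ffunE => /eqP.
by rewrite subn_eq0 => h; apply/eqP; rewrite eqn_leq h (forallP ha i).
Qed.

Lemma tmul_tconstl f c n : tmul (tconst c) f n = c * f n.
Proof.
rewrite /tmul (tmul_sum_single (t := mi0 s)) => [|i|a ha ne]; last 2 first.
- by rewrite ffunE.
- by rewrite /tconst /tscale /tone (negbTE ne) !mulr0 mul0r.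
rewrite /tconst /tscale /tone.
have -> : [ffun i => nat_of_ord ([ffun i => (inord (mi0 s i) : 'I_(mimax n).+1)] i)] = mi0 s.
  by apply/ffunP => i; rewrite !ffunE inordK.
have -> : [ffun i => (n i - [ffun i => (inord (mi0 s i) : 'I_(mimax n).+1)] i)%N] = n.
  by apply/ffunP => i; rewrite !ffunE inordK ?subn0.
by rewrite eqxx mulr1.
Qed.

Lemma tmul1l f n : tmul (tone s C) f n = f n.
Proof.
have -> : tone s C = tconst 1.
  by apply: functional_extensionality => m; rewrite /tconst /tscale mul1r.
by rewrite tmul_tconstl mul1r.
Qed.

Lemma tmulZl f g c n : tmul (tscale c f) g n = c * tmul f g n.
Proof. by rewrite /tmul mulr_sumr; apply: eq_bigr => a _; rewrite /tscale mulrA. Qed.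

Lemma tmulZr f g c n : tmul f (tscale c g) n = c * tmul f g n.
Proof. by rewrite /tmul mulr_sumr; apply: eq_bigr => a _; rewrite /tscale; ring. Qed.

Lemma tmul0l g n : tmul (tzero s C) g n = 0.
Proof. by rewrite /tmul big1 // => a _; rewrite /tzero mul0r. Qed.

Lemma tmul0r f n : tmul f (tzero s C) n = 0.
Proof. by rewrite /tmul big1 // => a _; rewrite /tzero mulr0. Qed.

Lemma tfrob0 q f : tfrob q 0 f = f.
Proof. by apply: functional_extensionality => m; rewrite /tfrob expn0 expr1. Qed.

Lemma tfrobD q k j f : tfrob q j (tfrob q k f) = tfrob q (k + j) f.
Proof. by apply: functional_extensionality => m; rewrite /tfrob expnD exprM. Qed.

Lemma tfrob_tscale q k c f : tfrob q k (tscale c f) = tscale (c ^+ (q ^ k)) (tfrob q k f).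
Proof. by apply: functional_extensionality => m; rewrite /tfrob /tscale exprMn. Qed.

Lemma tfrob_tzero q k : (0 < q)%N -> tfrob q k (tzero s C) = tzero s C.
Proof.
move=> q0; apply: functional_extensionality => m.
by rewrite /tfrob /tzero expr0n expn_eq0 gtn_eqF.
Qed.

Lemma tfrob_tconst q k c : (0 < q)%N ->
  tfrob q k (tconst (s := s) c) = tconst (c ^+ (q ^ k)).
Proof.
move=> q0; rewrite /tconst tfrob_tscale; congr tscale.
apply: functional_extensionality => m; rewrite /tfrob /tone.
by case: eqP; rewrite ?expr1n // expr0n expn_eq0 gtn_eqF.
Qed.

Lemma tfrob_tmul q k f g : [pchar C].-nat (q ^ k)%N ->
  tfrob q k (tmul f g) = tmul (tfrob q k f) (tfrob q k g).
Proof.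
move=> pchar_qk; apply: functional_extensionality => n.
by rewrite /tfrob /tmul expr_sum_pchar //; apply: eq_bigr => a _; rewrite exprMn.
Qed.

Variable av : C -> RR.
Hypothesis Hav : nonarch_abs_value av.

Lemma av_tmul_le f g (Bf Bg : RR) : 0 <= Bf -> 0 <= Bg ->
  (forall m, av (f m) <= Bf) -> (forall m, av (g m) <= Bg) ->
  forall n, av (tmul f g n) <= Bf * Bg.
Proof.
move=> Bf0 Bg0 f_le g_le n; apply: (av_sum_le Hav _ (mulr_ge0 Bf0 Bg0)) => a _.
by rewrite (avM Hav) ler_pM ?av_ge0.
Qed.

Lemma tate_bounded f : is_tate av f -> exists B : RR, 0 <= B /\ forall m, av (f m) <= B.
Proof.
move=> f_tate; have [N hN] := f_tate 1 ltr01.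
pose S := \sum_(a : {ffun 'I_s -> 'I_N.+1}) av (f [ffun i => nat_of_ord (a i)]).
have S0 : 0 <= S by apply: sumr_ge0 => a _; apply: av_ge0.
exists (1 + S); split => [|m]; first exact: addr_ge0.
case: (ltnP N (\sum_(i < s) m i)) => hm.
  by apply/ltW/(lt_le_trans (hN m hm)); rewrite lerDl.
have m_lt i : (m i < N.+1)%N.
  by rewrite ltnS (leq_trans _ hm) // (bigD1 i) //= leq_addr.
pose a0 : {ffun 'I_s -> 'I_N.+1} := [ffun i => inord (m i)].
have a0E : [ffun i => nat_of_ord (a0 i)] = m by apply/ffunP => i; rewrite !ffunE inordK.
apply: le_trans (_ : S <= _); last by rewrite lerDr.
rewrite /S (bigD1 a0) //= a0E lerDl.
by apply: sumr_ge0 => a _; apply: av_ge0.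
Qed.

End TateAlgebra.

Section TwistedSeries.

Variables (C : fieldType) (s q : nat).
Implicit Types (a b alpha : nat -> mi s -> C) (c : C).

Lemma twmul_twconstr a c n m : (0 < q)%N ->
  twmul q a (twconst c) n m = c ^+ (q ^ n) * a n m.
Proof.
move=> q0; rewrite /twmul big_ord_recr /= subnn /twconst eqxx tfrob_tconst //.
rewrite tmul_tconstr big1 ?add0r // => i _.
by rewrite subn_eq0 leqNgt ltn_ord /= tfrob_tzero // tmul0r.
Qed.

Lemma twmul_twconstl b c n m : twmul q (twconst c) b n m = c * b n m.
Proof.
rewrite /twmul big_ord_recl /= subn0 /twconst eqxx tfrob0 tmul_tconstl.
by rewrite big1 ?addr0 // => i _; rewrite tmul0l.
Qed.

Lemma twmul_phi_theta (theta : C) r A alpha n m :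
  twmul q (phi_theta theta r A) alpha n m
  = theta * alpha n m + twmul q (delta0_theta r A) alpha n m.
Proof.
rewrite /twmul !big_ord_recl /= subn0 /phi_theta /delta0_theta eqxx tfrob0.
by rewrite tmul_tconstl tmul0l add0r.
Qed.

Lemma twmul_twtau j alpha n m : twmul q (twtau s C j) alpha n m =
  if (j <= n)%N then alpha (n - j)%N m ^+ (q ^ j) else 0.
Proof.
rewrite /twmul /twtau; case: leqP => hj.
  rewrite (bigD1 (Ordinal (hj : j < n.+1)%N)) //= eqxx tmul1l /tfrob big1 ?addr0 // => i ne.
  have -> : (nat_of_ord i == j) = false.
    by apply/negbTE; apply: contra ne => /eqP e; apply/eqP/val_inj.
  by rewrite tmul0l.
rewrite big1 // => i _; have -> : (nat_of_ord i == j) = false.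
  by apply/negbTE; rewrite neq_ltn (leq_trans (ltn_ord i)).
by rewrite tmul0l.
Qed.

Lemma tw_terms_tscale a c f k m :
  tw_terms q a (tscale c f) k m = c ^+ (q ^ k) * tw_terms q a f k m.
Proof. by rewrite /tw_terms tfrob_tscale tmulZr. Qed.

End TwistedSeries.

Section DrinfeldModuleOverTate.

Variables (p e : nat) (C : fieldType) (av : C -> RR) (theta : C).
Hypothesis HC : is_Cinfty p e C av theta.

Local Notation q := (p ^ e)%N.

Lemma Cinfty_nonarch : nonarch_abs_value av.
Proof. by case: HC => _ [_ [_ [_ []]]]. Qed.

Lemma Cinfty_complete : av_complete av.
Proof. by case: HC => _ [_ [_ [_ [_ []]]]]. Qed.

Lemma Cinfty_av_theta : av theta = q%:R.
Proof. by case: HC => _ [_ [_ [_ [_ [_ []]]]]]. Qed.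

Lemma Cinfty_q_gt1 : (1 < q)%N.
Proof.
case: HC => /prime_gt1 p_gt1 [e_gt0 _].
by rewrite -[X in (X < _)%N](expn0 p) ltn_exp2l.
Qed.

Lemma Cinfty_pchar_q k : [pchar C].-nat (q ^ k)%N.
Proof.
case: HC => p_pr [_ [pchar_p _]].
by rewrite -expnM (eq_pnat _ (pcharf_eq pchar_p)) pnatX pnat_id.
Qed.

Local Notation Hav := Cinfty_nonarch.

Lemma Cinfty_q_gt0 : (0 < q)%N.
Proof. exact: ltnW Cinfty_q_gt1. Qed.

Lemma Cinfty_q_pow_gt0 k : (0 < q ^ k)%N.
Proof. by rewrite expn_gt0 Cinfty_q_gt0. Qed.

Lemma av_theta_frob_subr_ge1 z n : (0 < n)%N -> av (z - theta) < 1 ->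
  1 <= av (theta ^+ (q ^ n) - z).
Proof.
move=> n0 z_near.
have q1 : (1 : RR) < q%:R by rewrite ltr1n Cinfty_q_gt1.
have theta_gt1 : 1 < av theta by rewrite Cinfty_av_theta.
have lt_theta : av theta < av (theta ^+ (q ^ n)).
  rewrite (avX Hav) Cinfty_av_theta -[ltLHS]expr1 (ltr_eXn2l q1).
  by rewrite -[X in (X < _)%N](expn0 q) ltn_exp2l ?Cinfty_q_gt1.
have av_sub := avB_dominant Hav lt_theta.
have -> : theta ^+ (q ^ n) - z = (theta ^+ (q ^ n) - theta) - (z - theta) by ring.
rewrite (avB_dominant Hav) av_sub; first exact/ltW/(lt_trans theta_gt1).
by rewrite (lt_trans z_near) // (lt_trans theta_gt1).
Qed.

Lemma theta_frob_subr_neq0 n : (0 < n)%N -> theta ^+ (q ^ n) - theta != 0.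
Proof.
move=> n0; apply/eqP => eq0.
have := av_theta_frob_subr_ge1 n0 (z := theta); rewrite subrr (av0 Hav) eq0 (av0 Hav).
by move/(_ ltr01); rewrite ler10.
Qed.

Lemma av_inv_theta_frob_subr_le1 n : (0 < n)%N ->
  av (theta ^+ (q ^ n) - theta)^-1 <= 1.
Proof.
move=> n0; have ge1 := av_theta_frob_subr_ge1 n0 (z := theta).
rewrite subrr (av0 Hav) in ge1.
by rewrite (avV Hav) invf_le1 ?(lt_le_trans ltr01) ?ge1.
Qed.

Lemma Cinfty_theta_neq0 : theta != 0.
Proof.
by apply/eqP => theta0; move: Cinfty_av_theta; rewrite theta0 (av0 Hav) => /eqP;
  rewrite eq_sym pnatr_eq0 gtn_eqF ?Cinfty_q_gt0.
Qed.

Lemma av_inv_theta_frob_le1 n : av (theta ^+ (q ^ n))^-1 <= 1.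
Proof.
rewrite (avV Hav) (avX Hav) Cinfty_av_theta invf_le1 ?exprn_gt0 ?ltr0n ?Cinfty_q_gt0 //.
by rewrite exprn_ege1 // ler1n Cinfty_q_gt0.
Qed.

Lemma av_theta_div_frob_le_half n : (0 < n)%N ->
  av (theta / theta ^+ (q ^ n)) <= 2^-1.
Proof.
move=> n0; have q2 : (2 <= q)%N := Cinfty_q_gt1.
rewrite (avM Hav) (avV Hav) (avX Hav) Cinfty_av_theta -natrX.
have QP : (0 : RR) < (q ^ q ^ n)%:R by rewrite ltr0n Cinfty_q_pow_gt0.
rewrite ler_pdivrMr // mulrC ler_pdivlMr // -natrM ler_nat.
apply: (@leq_trans (q ^ 2)); first by rewrite expnS expn1 leq_mul2l q2 orbT.
rewrite leq_exp2l // (leq_trans q2) // -[X in (X <= _)%N]expn1 leq_exp2l //.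
Qed.

Variables (s r : nat) (A alpha : nat -> mi s -> C).
Hypothesis HA : forall k : nat, (1 <= k <= r)%N -> is_tate av (A k).
Hypothesis Halpha : is_exp_series q theta (phi_theta theta r A) alpha.

Lemma exp_coeff_eq n m :
  (theta ^+ (q ^ n) - theta) * alpha n m = twmul q (delta0_theta r A) alpha n m.
Proof.
have := congr1 (fun F => F n m) Halpha.2.
rewrite /= twmul_twconstr ?Cinfty_q_gt0 // twmul_phi_theta => exp_eq.
by rewrite mulrBl exp_eq addrAC subrr add0r.
Qed.

Lemma exp_coeff_bounded n : exists B : RR, 0 <= B /\ forall m, av (alpha n m) <= B.
Proof.
elim/ltn_ind: n => -[_|n IH].
  exists 1; split => // m; rewrite Halpha.1 /tone.
  by case: eqP; rewrite ?(av1 Hav) ?(av0 Hav).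
pose P k (B : RR) := forall m,
  av (tmul (delta0_theta r A k) (tfrob q k (alpha (n.+1 - k)%N)) m) <= B.
have [B [B0 hB]] : exists B : RR, 0 <= B /\ forall k, (k < n.+2)%N -> P k B.
  apply: uniform_bound_ltn => [k B B' le_BB' h m|k _].
    exact: le_trans (h m) le_BB'.
  rewrite /P /delta0_theta; case: (posnP k) => [->|k0].
    by exists 0; split => // m; rewrite tmul0l (av0 Hav).
  case: ifP => kr; last by exists 0; split => // m; rewrite tmul0l (av0 Hav).
  have [BA [BA0 hBA]] := tate_bounded Hav (HA (introT andP (conj k0 kr))).
  have lt_nk : (n.+1 - k < n.+1)%N by rewrite ltn_subrL k0.
  have [Ba [Ba0 hBa]] := IH _ lt_nk.
  exists (BA * Ba ^+ (q ^ k)); split; first by rewrite mulr_ge0 ?exprn_ge0.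
  by apply: (av_tmul_le Hav) => // [|m]; rewrite ?exprn_ge0 // /tfrob (avX_le Hav).
exists B; split => // m.
have n1 := ltn0Sn n; have dn := theta_frob_subr_neq0 n1.
rewrite -[alpha _ m]mul1r -(mulVf dn) -mulrA exp_coeff_eq (avM Hav).
rewrite -[B]mul1r; apply: ler_pM; rewrite ?(av_ge0 Hav) ?av_inv_theta_frob_subr_le1 //.
by apply: (av_sum_le Hav _ B0) => k _; apply: hB.
Qed.

Variable lam : mi s -> C.
Hypothesis Hlam : in_period_lattice av q alpha lam.

Lemma tw_terms_exp0 m : tw_terms q alpha lam 0 m = lam m.
Proof. by rewrite /tw_terms Halpha.1 tfrob0 tmul1l. Qed.

Lemma exp_terms_bounded :
  exists B : RR, 0 <= B /\ forall k m, av (tw_terms q alpha lam k m) <= B.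
Proof.
case: Hlam => lam_tate exp_lam0.
have [Bl [Bl0 hBl]] := tate_bounded Hav lam_tate.
have [N hN] := series_to_null Hav exp_lam0 ltr01.
have [B [B0 hB]] : exists B : RR, 0 <= B /\ forall k, (k < N)%N ->
    forall m, av (tw_terms q alpha lam k m) <= B.
  apply: uniform_bound_ltn => [k B B' le_BB' h m|k _]; first exact: le_trans (h m) le_BB'.
  have [Ba [Ba0 hBa]] := exp_coeff_bounded k.
  exists (Ba * Bl ^+ (q ^ k)); split; first by rewrite mulr_ge0 ?exprn_ge0.
  by apply: (av_tmul_le Hav) => // [|m]; rewrite ?exprn_ge0 // /tfrob (avX_le Hav).
exists (B + 1); split => [|k m]; first exact: addr_ge0.
case: (ltnP k N) => hk; first by rewrite ler_wpDr ?(hB k hk m).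
by rewrite ler_wpDl ?(hN k m hk).
Qed.

Definition agf_terms (z : C) : nat -> mi s -> C :=
  fun n => tscale ((theta ^+ (q ^ n) - z)^-1) (tw_terms q alpha lam n).

Lemma av_agf_terms_le z n m : (0 < n)%N -> av (z - theta) < 1 ->
  av (agf_terms z n m) <= av (tw_terms q alpha lam n m).
Proof.
move=> n0 z_near; rewrite /agf_terms /tscale (avM Hav) (avV Hav).
apply: ler_piMl; first exact: (av_ge0 Hav).
by rewrite invf_le1 ?(lt_le_trans ltr01) ?av_theta_frob_subr_ge1.
Qed.

Lemma agf_near_theta z B : 0 <= B ->
  (forall k m, av (tw_terms q alpha lam k m) <= B) -> av (z - theta) < 1 ->
  exists v, series_to av (agf_terms z) v /\
            forall m, av (v m - (theta - z)^-1 * lam m) <= B.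
Proof.
move=> B0 hB z_near; case: Hlam => _ exp_lam0.
have [v hv] : exists v, series_to av (agf_terms z) v.
  apply: (series_to_of_null Hav Cinfty_complete) => eps e0.
  have [N hN] := series_to_null Hav exp_lam0 e0.
  exists N.+1 => n m hn.
  exact: le_trans (av_agf_terms_le m (leq_trans (ltn0Sn N) hn) z_near) (hN n m (ltnW hn)).
exists v; split => // m.
have := series_to_tail Hav (n := 1) hv B0
  (fun k m' k_gt0 => le_trans (av_agf_terms_le m' k_gt0 z_near) (hB k m')) m.
by rewrite big_ord1 /agf_terms /tscale expn0 expr1 tw_terms_exp0.
Qed.

Lemma agf_residue_period : agf_residue_at_theta av q theta alpha lam (topp lam).
Proof.
have [B [B0 hB]] := exp_terms_bounded.
move=> eps e0; have B1 : 0 < B + 1 by rewrite ltr_wpDl.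
exists (Num.min 1 (eps / (B + 1))); split => [|z z_ne].
  by rewrite lt_min ltr01 divr_gt0.
rewrite lt_min => /andP[z_near z_del].
have [v [hv v_near]] := agf_near_theta B0 hB z_near.
exists v; split => // m.
have tz : theta - z != 0.
  by apply/eqP => /eqP; rewrite subr_eq0 => /eqP zE; move: z_ne; rewrite zE subrr (av0 Hav) ltxx.
have -> : (z - theta) * v m - topp lam m = (z - theta) * (v m - (theta - z)^-1 * lam m).
  by rewrite /topp; field; rewrite ?tz.
rewrite (avM Hav); apply: le_trans (mulr_divD1_le (ltW e0) B0).
by apply: ler_pM; rewrite ?(av_ge0 Hav) ?(ltW z_del) ?v_near.
Qed.

Section FDelta0.

Variable beta0 : nat -> mi s -> C.
Hypothesis Hbeta0 : is_F_series q theta (delta0_theta r A) alpha beta0.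

Lemma F_delta0_coeff n : (0 < n)%N -> beta0 n = alpha n.
Proof.
move=> n0; apply: functional_extensionality => m.
have := congr1 (fun F => F m) (Hbeta0.2 n).
rewrite /tsub /= twmul_twconstr ?Cinfty_q_gt0 // twmul_twconstl -mulrBl -exp_coeff_eq.
exact/(mulfI (theta_frob_subr_neq0 n0)).
Qed.

Lemma F_delta0_period : series_to av (tw_terms q beta0 lam) (topp lam).
Proof.
case: Hlam => _ exp_lam0.
have beta_eq n m : (0 < n)%N -> tw_terms q beta0 lam n m = tw_terms q alpha lam n m.
  by move=> n0; rewrite /tw_terms F_delta0_coeff.
apply: (series_to_ext (series_to_eq_tail exp_lam0 beta_eq)) => // m.
by rewrite /tzero tw_terms_exp0 /tw_terms Hbeta0.1 tmul0l sub0r addr0.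
Qed.

End FDelta0.

Section FTau.

Variables (j : nat) (betaj : nat -> mi s -> C).
Hypothesis j_gt0 : (0 < j)%N.
Hypothesis Hbetaj : is_F_series q theta (twtau s C j) alpha betaj.

Local Notation Q := (q ^ j)%N.
Local Notation c := (tw_terms q alpha lam).
Local Notation agf_double n k m :=
  (theta ^+ n * tw_terms q alpha (tscale (theta ^- n.+1) lam) k m ^+ Q).

Lemma F_tau_coeff_eq n m : (theta ^+ (q ^ n) - theta) * betaj n m =
  if (j <= n)%N then alpha (n - j)%N m ^+ Q else 0.
Proof.
have := congr1 (fun F => F m) (Hbetaj.2 n).
by rewrite /tsub /= twmul_twconstr ?Cinfty_q_gt0 // twmul_twconstl twmul_twtau mulrBl => <-.
Qed.

Lemma F_tau_coeff_lt n : (n < j)%N -> betaj n = tzero s C.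
Proof.
case: n => [_|n lt_nj]; first exact: Hbetaj.1.
apply: functional_extensionality => m; apply: (mulfI (theta_frob_subr_neq0 (ltn0Sn n))).
by rewrite F_tau_coeff_eq leqNgt lt_nj /tzero mulr0.
Qed.

Lemma F_tau_terms_shift k m : tw_terms q betaj lam (k + j) m =
  (theta ^+ (q ^ (k + j)) - theta)^-1 * c k m ^+ Q.
Proof.
have dn := theta_frob_subr_neq0 (ltn_addl k j_gt0).
have betaE : betaj (k + j) = tscale (theta ^+ (q ^ (k + j)) - theta)^-1 (tfrob q j (alpha k)).
  apply: functional_extensionality => m'; apply: (mulfI dn).
  by rewrite F_tau_coeff_eq leq_addl addnK /tscale /tfrob mulrA mulfV // mul1r.
by rewrite /tw_terms betaE tmulZl -tfrobD -tfrob_tmul ?Cinfty_pchar_q.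
Qed.

Lemma F_tau_shifted_null :
  null_seq av (fun k m => (theta ^+ (q ^ (k + j)) - theta)^-1 * c k m ^+ Q).
Proof.
case: Hlam => _ exp_lam0 eps e0.
have e1 : 0 < Num.min eps 1 by rewrite lt_min e0 ltr01.
have [N hN] := series_to_null Hav exp_lam0 e1.
exists N => k m hk; rewrite (avM Hav) -[eps]mul1r.
apply: ler_pM; rewrite ?(av_ge0 Hav) ?av_inv_theta_frob_subr_le1 ?ltn_addl //.
by rewrite (avX Hav); apply: exprn_le_min; rewrite ?Cinfty_q_pow_gt0 ?(av_ge0 Hav) ?hN.
Qed.

Lemma agf_double_term n k m : agf_double n k m =
  (theta ^+ (q ^ (k + j)))^-1 * (theta / theta ^+ (q ^ (k + j))) ^+ n * c k m ^+ Q.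
Proof.
rewrite tw_terms_tscale exprMn -exprM -expnD.
have -> : (theta ^- n.+1) ^+ (q ^ (k + j)) =
    (theta ^+ (q ^ (k + j)))^-1 * ((theta ^+ (q ^ (k + j)))^-1) ^+ n.
  by rewrite -exprS !exprVn -!exprM mulnC.
by rewrite exprMn; ring.
Qed.

Lemma av_agf_double_le n k m : av (agf_double n k m) <= (2^-1) ^+ n * av (c k m) ^+ Q.
Proof.
rewrite agf_double_term !(avM Hav) !(avX Hav).
apply: ler_wpM2r; first exact: exprn_ge0 (av_ge0 Hav _).
apply: le_trans (ler_piMl _ (av_inv_theta_frob_le1 _)) _; first exact: exprn_ge0 (av_ge0 Hav _).
apply: lerXn2r; rewrite ?nnegrE ?(av_ge0 Hav) ?invr_ge0 //.
exact: av_theta_div_frob_le_half (ltn_addl k j_gt0).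
Qed.

Lemma agf_double_null : forall eps : RR, 0 < eps -> exists N, forall n k m,
  (N <= n)%N \/ (N <= k)%N -> av (agf_double n k m) <= eps.
Proof.
have [B [B0 hB]] := exp_terms_bounded; case: Hlam => _ exp_lam0.
move=> eps e0; have e1 : 0 < Num.min eps 1 by rewrite lt_min e0 ltr01.
have [Nk hNk] := series_to_null Hav exp_lam0 e1.
have BQ0 : 0 <= B ^+ Q := exprn_ge0 Q B0.
have e2 : 0 < eps / (B ^+ Q + 1) by rewrite divr_gt0 // ltr_wpDl.
have half0 : (0 : RR) <= 2^-1 by rewrite invr_ge0.
have [Nn hNn] := expr_half_small half0 (lexx _) e2.
exists (maxn Nk Nn) => n k m; rewrite !geq_max => nk_large.
apply: le_trans (av_agf_double_le n k m) _.
have cQ0 : 0 <= av (c k m) ^+ Q by rewrite exprn_ge0 ?(av_ge0 Hav).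
have avc0 : 0 <= av (c k m) := av_ge0 Hav _.
case: nk_large => [/andP[_ hn]|/andP[hk _]].
  apply: le_trans (mulr_divD1_le (ltW e0) BQ0).
  apply: ler_pM; rewrite ?exprn_ge0 ?hNn //.
  by apply: lerXn2r; rewrite ?nnegrE.
rewrite -[eps]mul1r; apply: ler_pM; rewrite ?exprn_ge0 //.
  by apply: exprn_ile1; rewrite ?invf_le1 ?ler1n.
by apply: exprn_le_min; rewrite ?Cinfty_q_pow_gt0 ?hNk.
Qed.

Lemma agf_column_series k : series_to av (fun n m => agf_double n k m)
  (fun m => (theta ^+ (q ^ (k + j)) - theta)^-1 * c k m ^+ Q).
Proof.
have [B [B0 hB]] := exp_terms_bounded.
set P := (q ^ (k + j))%N.
have x_null : forall eps : RR, 0 < eps -> exists N, forall n, (N <= n)%N ->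
    av ((theta / theta ^+ P) ^+ n) <= eps.
  move=> eps e0; have half := av_theta_div_frob_le_half (ltn_addl k j_gt0).
  have [N hN] := expr_half_small (av_ge0 Hav _) half e0.
  by exists N => n hn; rewrite (avX Hav) hN.
have cQ_le m : av (c k m ^+ Q) <= B ^+ Q by apply: (avX_le Hav).
have geo := series_to_geometric Hav (theta ^+ P)^-1 x_null cQ_le.
apply: (series_to_ext geo) => [n m|m]; first by rewrite agf_double_term.
have P0 : theta ^+ P != 0 by rewrite expf_neq0 ?Cinfty_theta_neq0.
by rewrite -invfM mulrBr mulr1 mulrCA mulfV // mulr1.
Qed.

Lemma F_tau_period_agf (exp_lam : nat -> mi s -> C) :
  (forall n, series_to av (tw_terms q alpha (tscale (theta ^- n.+1) lam)) (exp_lam n)) ->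
  exists X, series_to av (tw_terms q betaj lam) X /\
            series_to av (fun n => tscale (theta ^+ n) (tfrob q j (exp_lam n))) X.
Proof.
move=> Hexp; have [X hX] := series_to_of_null Hav Cinfty_complete F_tau_shifted_null.
exists X; split.
  apply: series_to_shift hX _ F_tau_terms_shift => n m lt_nj.
  by rewrite /tw_terms F_tau_coeff_lt // tmul0l.
apply: (series_to_exchange Hav agf_double_null _ agf_column_series hX) => n.
exact: (series_to_ext (series_to_scale Hav _ (series_to_frob Hav (Cinfty_pchar_q j) (Hexp n)))).
Qed.

End FTau.

End DrinfeldModuleOverTate.

Unset Implicit Arguments. Set Strict Implicit.

Theorem proposition5p7
  (p e : nat) (C : fieldType) (av : C -> RR) (theta : C)
  (HC : is_Cinfty p e C av theta)
  (s r : nat) (A : nat -> mi s -> C)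
  (Hr : (0 < r)%N)
  (HA : forall k : nat, (1 <= k <= r)%N -> is_tate av (A k))
  (HAr : tate_unit av (A r))
  (alpha : nat -> mi s -> C)
  (Halpha : is_exp_series (p ^ e) theta (phi_theta theta r A) alpha)
  (lam : mi s -> C)
  (Hlam : in_period_lattice av (p ^ e) alpha lam)
  (* exp_lam n = exp_phi (lam / theta^{n+1}), the coefficients of f_lam *)
  (exp_lam : nat -> mi s -> C)
  (Hexp_lam : forall n : nat,
      series_to av (tw_terms (p ^ e) alpha (tscale (theta ^- n.+1) lam))
                (exp_lam n)) :
  (* (a) *)
  (forall beta0 : nat -> mi s -> C,
     is_F_series (p ^ e) theta (delta0_theta r A) alpha beta0 ->
     series_to av (tw_terms (p ^ e) beta0 lam) (topp lam) /\
     agf_residue_at_theta av (p ^ e) theta alpha lam (topp lam)) /\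
  (* (b) *)
  (forall (j : nat) (betaj : nat -> mi s -> C),
     (1 <= j <= r - 1)%N ->
     is_F_series (p ^ e) theta (twtau s C j) alpha betaj ->
     exists X : mi s -> C,
       series_to av (tw_terms (p ^ e) betaj lam) X /\
       (* X = sum_n exp_phi(lam/theta^{n+1})^{(j)} theta^n = f_lam^{(j)}(theta) *)
       series_to av (fun n => tscale (theta ^+ n) (tfrob (p ^ e) j (exp_lam n))) X).
Proof.
split=> [beta0 Hbeta0|j betaj /andP[j_gt0 _] Hbetaj].
  split; first exact (F_delta0_period HC Halpha Hlam Hbeta0).
  exact (agf_residue_period HC HA Halpha Hlam).
exact (F_tau_period_agf HC HA Halpha Hlam j_gt0 Hbetaj Hexp_lam).
Qed.
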